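(* Let $(\mathbb{K},|\cdot|)$ be an algebraically closed normed field, $f\in\mathbb{K}[z]$ a polynomial of degree $n\ge2$, $\xi\in\mathbb{K}^n$ a root-vector of $f$, $N\ge1$ and $1\le p\le\infty$. Suppose $x^{(0)}\in\mathbb{K}^n$ has pairwise distinct components and \[ \Psi(E(x^{(0)}))\le 2 . \] Then $f$ has only simple zeros, and the $N$th Weierstrass-type iteration $x^{(k+1)}=T^{(N)}(x^{(k)})$ is well-defined and converges to $\xi$ with error estimates \[ \|x^{(k+1)}-\xi\|\preceq\theta\,\lambda^{(N+1)^k}\|x^{(k)}-\xi\|,\qquad \|x^{(k)}-\xi\|\preceq\theta^k\lambda^{((N+1)^k-1)/N}\|x^{(0)}-\xi\| \] for all $k\ge0$, where $\lambda=\phi_N(E(x^{(0)}))$ and $\theta=\psi_N(E(x^{(0)}))$. Moreover, if $\Psi(E(x^{(0)}))<2$, then the iteration converges to $\xi$ with order of convergence $N+1$.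
   Context: $a_0$ is the leading coefficient of $f$. For $1\le p\le\infty$, $\|x\|_p=(\sum_i|x_i|^p)^{1/p}$ (max-norm if $p=\infty$). For $x\in\mathbb{K}^n$, $\|x\|=(|x_1|,\dots,|x_n|)\in\mathbb{R}^n$ and $\preceq$ is the coordinatewise order on $\mathbb{R}^n$. $d(x)=(d_1(x),\dots,d_n(x))$, $d_i(x)=\min_{j\ne i}|x_i-x_j|$; for $x\in\mathbb{K}^n$, $y\in\mathbb{R}^n$ with nonzero components, $x/y=(|x_1|/y_1,\dots,|x_n|/y_n)$. A root-vector of $f$ is $\xi\in\mathbb{K}^n$ with $f(z)=a_0\prod_{i}(z-\xi_i)$ for all $z$. $E(x)=\|(x-\xi)/d(x)\|_p$. Weierstrass-type maps: $T^{(0)}(x)=x$ on $D_0=\mathbb{K}^n$; $D_{N+1}=\{x\in D_N: x_i\ne T^{(N)}_j(x)\ \forall i\ne j\}$, and for $x\in D_{N+1}$, $T^{(N+1)}_i(x)=x_i-\dfrac{f(x_i)}{a_0\prod_{j\ne i}(x_i-T^{(N)}_j(x))}$. The iteration is well-defined if $x^{(k)}\in D_N$ for all $k$. Real functions: $\omega(t)=\left(1+\frac{t}{(n-1)^{1/p}}\right)^{n-1}$ (with $(n-1)^{1/p}=1$ if $p=\infty$), $\Psi(t)=(1+2t)\omega(t)$ for $t\ge0$; $R$ is the unique positive solution of $\Psi(t)=2$. On $[0,R]$: $\phi_0\equiv1$, and recursively $\omega_N(t)=\left(1+\frac{t\phi_N(t)}{(n-1)^{1/p}}\right)^{n-1}$,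 $\phi_{N+1}(t)=\dfrac{\omega_N(t)-1}{1-2t\omega_N(t)}$ (well-defined, nondecreasing, with values in $[0,1]$); for $N\ge1$, $\psi_N(t)=1-2t\,\omega_{N-1}(t)$. *)

From HB Require Import structures.
From mathcomp Require Import all_boot all_order all_algebra.
From mathcomp Require Import all_classical all_reals.
From mathcomp Require Import ereal exp.
Set Implicit Arguments. Unset Strict Implicit. Unset Printing Implicit Defensive.
Import Order.TTheory GRing.Theory Num.Theory.
Local Open Scope ring_scope.

Definition absval (K : fieldType) (R : realType) (abs : K -> R) : Prop :=
  [/\ (forall x, 0 <= abs x),
      (forall x, abs x = 0 <-> x = 0),
      (forall x y, abs (x * y) = abs x * abs y) &
      (forall x y, abs (x + y) <= abs x + abs y)].

Definition lpnorm (R : realType) (p : \bar R) (n : nat) (v : 'I_n -> R) : R :=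
  match p with
  | +oo%E => \big[Num.max/0]_(i < n) `|v i|
  | EFin q => (\sum_(i < n) `|v i| `^ q) `^ q^-1
  | -oo%E => 0
  end.

Definition proot (R : realType) (p : \bar R) (n : nat) : R :=
  match p with
  | EFin q => (n.-1)%:R `^ q^-1
  | _ => 1
  end.

Definition omega (R : realType) (p : \bar R) (n : nat) (t : R) : R :=
  (1 + t / proot p n) ^+ n.-1.

Definition Psi (R : realType) (p : \bar R) (n : nat) (t : R) : R :=
  (1 + 2 * t) * omega p n t.

Fixpoint phi (R : realType) (p : \bar R) (n : nat) (N : nat) (t : R) : R :=
  match N with
  | 0 => 1
  | N'.+1 =>
      let w := (1 + t * phi p n N' t / proot p n) ^+ n.-1 in
      (w - 1) / (1 - 2 * t * w)
  end.

Definition omegaN (R : realType) (p : \bar R) (n : nat) (N : nat) (t : R) : R :=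
  (1 + t * phi p n N t / proot p n) ^+ n.-1.

Definition psi (R : realType) (p : \bar R) (n : nat) (N : nat) (t : R) : R :=
  1 - 2 * t * omegaN p n N.-1 t.

Definition dist (K : fieldType) (R : realType) (abs : K -> R) (n : nat)
    (x : 'I_n -> K) (i : 'I_n) : R :=
  fine (\big[Order.min/+oo%E]_(j < n | j != i) (abs (x i - x j))%:E).

Definition Err (K : fieldType) (R : realType) (abs : K -> R) (p : \bar R)
    (n : nat) (xi x : 'I_n -> K) : R :=
  lpnorm p (fun i => abs (x i - xi i) / dist abs x i).

Definition root_vector (K : fieldType) (n : nat) (f : {poly K}) (xi : 'I_n -> K) :=
  forall z, f.[z] = lead_coef f * \prod_(i < n) (z - xi i).

(* Weierstrass-type maps T^(N) (with the total division of MathComp; they are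
   used only on the domains D_N below, where no denominator vanishes). *)
Fixpoint WT (K : fieldType) (n : nat) (f : {poly K}) (N : nat) (x : 'I_n -> K)
    : 'I_n -> K :=
  match N with
  | 0 => x
  | N'.+1 => fun i =>
      x i - f.[x i] / (lead_coef f * \prod_(j < n | j != i) (x i - WT f N' x j))
  end.

Fixpoint inD (K : fieldType) (n : nat) (f : {poly K}) (N : nat) (x : 'I_n -> K)
    : Prop :=
  match N with
  | 0 => True
  | N'.+1 => inD f N' x /\ (forall i j : 'I_n, i != j -> x i != WT f N' x j)
  end.

Definition converges (K : fieldType) (R : realType) (abs : K -> R)
    (u : nat -> K) (l : K) : Prop :=
  forall eps : R, 0 < eps -> exists k0, forall k, (k0 <= k)%N -> abs (u k - l) < eps.

Definition maxnorm (K : fieldType) (R : realType) (abs : K -> R) (n : nat)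
    (v : 'I_n -> K) : R := \big[Num.max/0]_(i < n) abs (v i).

Definition conv_order (K : fieldType) (R : realType) (abs : K -> R) (n : nat)
    (x : nat -> 'I_n -> K) (xi : 'I_n -> K) (r : nat) : Prop :=
  (forall i, converges abs (fun k => x k i) (xi i)) /\
  exists C : R, 0 <= C /\ forall k,
    maxnorm abs (fun i => x k.+1 i - xi i)
      <= C * maxnorm abs (fun i => x k i - xi i) ^+ r.

From HB Require Import structures.
From mathcomp Require Import all_boot all_order all_algebra.
From mathcomp Require Import all_classical all_reals.
From mathcomp Require Import ereal exp convex hoelder sequences normedtype.
From mathcomp Require Import ring lra.
Import Order.TTheory GRing.Theory Num.Theory.
Set Implicit Arguments. Unset Strict Implicit. Unset Printing Implicit Defensive.
Local Open Scope ring_scope.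

(* Write t = E(x) and e_j = |x_j - xi_j| / d_j(x), so that |x_j - xi_j| <= e_j |x_i - x_j|
   <= t |x_i - x_j| for i <> j.  Since f(x_i) = a_0 prod_j (x_i - xi_j), a Weierstrass-type
   correction built on auxiliary points y moves x_i by
   (x_i - xi_i) prod_{j <> i} (1 + (y_j - xi_j) / (x_i - y_j)).  If |y_j - xi_j| <= g phi |x_j - xi_j|
   and |x_i - y_j| >= g |x_i - x_j|, every factor is at most 1 + phi e_j, and AM-GM followed by
   the power-mean inequality bounds the product by (1 + t phi / (n-1)^(1/p))^(n-1).  Induction on N
   then gives |T^(N)(x) - xi| <= (omega_{N-1}(t) - 1) |x - xi| = psi_N(t) phi_N(t) |x - xi| and
   d(T^(N)(x)) >= psi_N(t) d(x), hence E(T^(N)(x)) <= phi_N(t) t.  As phi_N(c t) <= c^N phi_N(t)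
   for 0 <= c <= 1, iterating yields E(x^(k)) <= lambda^(((N+1)^k - 1)/N) E(x^(0)), which gives
   both error estimates; convergence comes from psi_N < 1, and the order N + 1 from
   E(x^(k)) = O(max_i |x^(k)_i - xi_i|).  Finally |xi_i - xi_j| >= (1 - 2 E(x^(0))) |x^(0)_i - x^(0)_j|
   > 0, so the zeros of f are simple. *)

(** * The functions omega, Psi, phi and psi *)

Lemma expr1D_ge (R : realDomainType) m (a : R) : (0 < m)%N -> 0 <= a ->
  1 + a <= (1 + a) ^+ m.
Proof.
case: m => // m _ a0; rewrite exprS -[X in X <= _]mulr1 ler_wpM2l ?addr_ge0 //.
by rewrite exprn_ege1 // lerDl.
Qed.

Lemma expr1D_sub1_scale (R : realDomainType) m (a b c : R) :
  0 <= c <= 1 -> 0 <= b -> 0 <= a <= c * b ->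
  (1 + a) ^+ m - 1 <= c * ((1 + b) ^+ m - 1).
Proof.
move=> /andP[c0 c1] b0 /andP[a0 acb].
have cb0 : 0 <= c * b by rewrite mulr_ge0.
apply: (@le_trans _ _ ((1 + c * b) ^+ m - 1)).
  by rewrite lerD2r lerXn2r // ?nnegrE ?addr_ge0 // lerD2l.
rewrite !subrX1 [1 + c * b]addrC addrK [1 + b]addrC addrK mulrA.
apply: ler_wpM2l => //; apply: ler_sum => i _.
rewrite lerXn2r // ?nnegrE ?addr_ge0 // lerD2r.
by rewrite -[X in _ <= X]mul1r ler_wpM2r.
Qed.

(* The separation factor of T^(M): psi_M for M >= 1, and 1 for T^(0) = id. *)
Definition psi_ext (R : realType) (p : \bar R) n M (t : R) : R :=
  if M is 0%N then 1 else psi p n M t.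

Section real_functions.
Variables (R : realType) (p : \bar R) (n : nat).
Hypothesis n2 : (2 <= n)%N.

Lemma proot_gt0 : 0 < proot p n.
Proof.
case: p => [q| |] //=; apply: powR_gt0; rewrite ltr0n.
by case: n n2 => [|[|]].
Qed.

Lemma omega_ge t : 0 <= t -> 1 + t / proot p n <= omega p n t.
Proof.
move=> t0; apply: expr1D_ge; first by case: n n2 => [|[|]].
by rewrite divr_ge0 // ltW // proot_gt0.
Qed.

Lemma omega_ge1 t : 0 <= t -> 1 <= omega p n t.
Proof.
move=> t0; apply: le_trans (omega_ge t0).
by rewrite lerDl divr_ge0 // ltW // proot_gt0.
Qed.

Lemma ler_omega s t : 0 <= s -> s <= t -> omega p n s <= omega p n t.
Proof.
move=> s0 st; have pr0 := proot_gt0.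
rewrite /omega lerXn2r ?nnegrE ?addr_ge0 ?divr_ge0 ?(ltW pr0) ?(le_trans s0 st) //.
by rewrite lerD2l ler_pM2r ?invr_gt0.
Qed.

Lemma ler_Psi s t : 0 <= s -> s <= t -> Psi p n s <= Psi p n t.
Proof.
move=> s0 st; rewrite /Psi ler_pM ?addr_ge0 ?mulr_ge0 ?ler_omega //.
  exact: le_trans (omega_ge1 s0).
by rewrite lerD2l ler_pM2l.
Qed.

Lemma omegaN_ge1 M t : 0 <= t -> 0 <= phi p n M t -> 1 <= omegaN p n M t.
Proof.
move=> t0 f0; rewrite exprn_ege1 // lerDl.
by rewrite divr_ge0 ?mulr_ge0 // ltW // proot_gt0.
Qed.

Lemma omegaN_le_omega M t : 0 <= t -> 0 <= phi p n M t <= 1 ->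
  omegaN p n M t <= omega p n t.
Proof.
move=> t0 /andP[f0 f1]; have pr0 := proot_gt0.
rewrite /omegaN /omega lerXn2r ?nnegrE ?addr_ge0 ?divr_ge0 ?mulr_ge0 ?(ltW pr0) //.
by rewrite lerD2l ler_pM2r ?invr_gt0 // -[X in _ <= X]mulr1 ler_wpM2l.
Qed.

Section bounded_Psi.
Variable t : R.
Hypotheses (t0 : 0 <= t) (HP : Psi p n t <= 2).

(* [Psi t <= 2] reads [omega + 2 t omega <= 2], and [omega > 1] as soon as [t > 0]. *)
Lemma Psi_le2_gap : 0 < 1 - 2 * t * omega p n t.
Proof.
have pr0 := proot_gt0; have := omega_ge t0.
move: HP; rewrite /Psi; move: (omega p n t) => w HPw hw.
have [->|tp] := eqVneq t 0; first by rewrite mulr0 mul0r subr0.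
have : 0 < t / proot p n by rewrite divr_gt0 // lt_neqAle eq_sym tp.
nra.
Qed.

Lemma Psi_le2_lt_half : 2 * t < 1.
Proof.
have := Psi_le2_gap; have := omega_ge1 t0.
have : 0 <= 2 * t by rewrite mulr_ge0.
nra.
Qed.

Lemma psi_gt0_of_phi M : 0 <= phi p n M t <= 1 -> 0 < psi p n M.+1 t.
Proof.
move=> /(omegaN_le_omega t0) hw; apply: lt_le_trans Psi_le2_gap _.
by rewrite lerD2l lerN2 ler_wpM2l // mulr_ge0.
Qed.

Lemma phi_ge0_le1 M : 0 <= phi p n M t <= 1.
Proof.
elim: M => [|M IH] /=; first by rewrite ler01 lexx.
have g0 := psi_gt0_of_phi IH; rewrite /psi /= in g0.
have w1 := omegaN_ge1 t0 (proj1 (andP IH)).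
have wo := omegaN_le_omega t0 IH.
rewrite -/(omegaN p n M t); apply/andP; split.
  by apply: divr_ge0; [rewrite subr_ge0 | exact: ltW].
rewrite ler_pdivrMr // mul1r.
have : 0 <= (1 + 2 * t) * (omega p n t - omegaN p n M t).
  by rewrite mulr_ge0 ?subr_ge0 // addr_ge0 ?mulr_ge0.
move: HP; rewrite /Psi; nra.
Qed.

Lemma psi_gt0 M : 0 < psi p n M.+1 t.
Proof. exact/psi_gt0_of_phi/phi_ge0_le1. Qed.

Lemma psi_ext_gt0 M : 0 < psi_ext p n M t.
Proof. by case: M => [|M]; [exact: ltr01 | exact: psi_gt0]. Qed.

Lemma psi_mul_phi M : psi p n M.+1 t * phi p n M.+1 t = omegaN p n M t - 1.
Proof. by rewrite /= mulrC divfK // gt_eqF // psi_gt0. Qed.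

Lemma psi_lt1 M : 0 < t -> psi p n M.+1 t < 1.
Proof.
move=> tp; rewrite /psi /= ltrBlDr ltrDl !mulr_gt0 //.
exact: lt_le_trans ltr01 (omegaN_ge1 t0 (proj1 (andP (phi_ge0_le1 M)))).
Qed.

End bounded_Psi.

Section scaling.
Variables (t s c : R).
Hypotheses (t0 : 0 <= t) (HP : Psi p n t <= 2).
Hypotheses (c01 : 0 <= c <= 1) (s0 : 0 <= s) (sct : s <= c * t).

Let st : s <= t.
Proof. by apply: le_trans sct _; rewrite ler_piMl //; case/andP: c01. Qed.

Let HPs : Psi p n s <= 2.
Proof. exact: le_trans (ler_Psi s0 st) HP. Qed.

Let cX k : 0 <= c ^+ k <= 1.
Proof. by case/andP: c01 => c0 c1; rewrite exprn_ge0 // exprn_ile1. Qed.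

Lemma omegaN_scale_of_phi M : phi p n M s <= c ^+ M * phi p n M t ->
  omegaN p n M s - 1 <= c ^+ M.+1 * (omegaN p n M t - 1).
Proof.
move=> hM; have pr0 := proot_gt0.
have /andP[ft0 _] := phi_ge0_le1 t0 HP M; have /andP[fs0 _] := phi_ge0_le1 s0 HPs M.
apply: expr1D_sub1_scale; rewrite ?divr_ge0 ?mulr_ge0 ?(ltW pr0) //=.
rewrite mulrA ler_pM2r ?invr_gt0 // exprS mulrACA.
by apply: ler_pM.
Qed.

Lemma phi_scale M : phi p n M s <= c ^+ M * phi p n M t.
Proof.
elim: M => [|M IH]; first by rewrite expr0 mul1r.
have hw := omegaN_scale_of_phi IH.
have ws1 := omegaN_ge1 s0 (proj1 (andP (phi_ge0_le1 s0 HPs M))).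
have wt1 := omegaN_ge1 t0 (proj1 (andP (phi_ge0_le1 t0 HP M))).
have gs := psi_gt0 s0 HPs M; have gt := psi_gt0 t0 HP M.
rewrite /psi /= in gs gt; rewrite /= -!/(omegaN p n M _) mulrA.
have wst : omegaN p n M s <= omegaN p n M t.
  have := cX M.+1; have : 0 <= omegaN p n M t - 1 by rewrite subr_ge0.
  nra.
have dst : 1 - 2 * t * omegaN p n M t <= 1 - 2 * s * omegaN p n M s.
  by rewrite lerD2l lerN2 -!mulrA ler_pM // ?mulr_ge0 // ?ler_pM // (le_trans ler01).
apply: le_trans (_ : (omegaN p n M s - 1) / (1 - 2 * t * omegaN p n M t) <= _).
  by rewrite ler_wpM2l ?subr_ge0 // lef_pV2 ?posrE.
by rewrite ler_pM2r ?invr_gt0.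
Qed.

Lemma omegaN_scale M : omegaN p n M s - 1 <= c ^+ M.+1 * (omegaN p n M t - 1).
Proof. exact/omegaN_scale_of_phi/phi_scale. Qed.

End scaling.
End real_functions.

(** * Power means and l^p norms *)

Lemma powRK (R : realType) (q x : R) : q != 0 -> 0 <= x -> (x `^ q) `^ q^-1 = x.
Proof. by move=> q0 x0; rewrite -powRrM mulfV // powRr1. Qed.

Lemma powRV (R : realType) (x r : R) : 0 < x -> x^-1 `^ r = (x `^ r)^-1.
Proof.
move=> x0; apply: (mulfI (x := x `^ r)); first by rewrite gt_eqF // powR_gt0.
by rewrite -powRM ?invr_ge0 ?ltW // mulfV ?gt_eqF // powR1 divff // gt_eqF // powR_gt0.
Qed.

Lemma powR_mean_le (R : realType) (q : R) (r : seq R) :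
  1 <= q -> all (>= 0) r ->
  ((\sum_(a <- r) a) / (size r)%:R) `^ q <= (\sum_(a <- r) a `^ q) / (size r)%:R.
Proof.
move=> q1; elim: r => [|a r IH] /=.
  by rewrite !big_nil !mul0r powR0 // gt_eqF // (lt_le_trans ltr01 q1).
case/andP=> a0 r0; rewrite !big_cons.
have [->|r_neq0] := eqVneq r [::]; first by rewrite !big_nil !addr0 divr1 divr1.
have k0 : 0 < (size r)%:R :> R by rewrite ltr0n lt0n size_eq0.
set S := \sum_(a <- r) a; set T := \sum_(a <- r) a `^ q; set k := size r.
have S0 : 0 <= S by rewrite /S big_seq sumr_ge0 // => b /(allP r0).
pose l : R := (k.+1)%:R^-1.
have l0 : 0 <= l by rewrite invr_ge0.
have l1 : l <= 1 by rewrite invf_le1 ?ler1n.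
have mean_split (A B : R) : (A + B) / k.+1%:R = l * A + (1 - l) * (B / k%:R).
  by rewrite /l; field; rewrite !gt_eqF // addr_gt0.
have cvx : (l * a + (1 - l) * (S / k%:R)) `^ q
    <= l * a `^ q + (1 - l) * (S / k%:R) `^ q.
  have := @convex_powR R q q1 (Itv01 l0 l1) a (S / k%:R).
  rewrite !inE /= !in_itv /= !andbT a0 divr_ge0 ?(ltW k0) // => /(_ isT isT).
  by rewrite !convRE.
rewrite !mean_split; apply: le_trans cvx _.
by rewrite lerD2l; apply: ler_wpM2l; [rewrite subr_ge0 | exact: IH].
Qed.

Section lp_norm.
Variables (R : realType) (p : \bar R) (n : nat).

Lemma lpnorm_ge0 (v : 'I_n -> R) : 0 <= lpnorm p v.
Proof.
case: p => [q| |] //=; first exact: powR_ge0.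
by elim/big_ind: _ => // a b ha hb; rewrite le_max ha.
Qed.

Hypothesis hp : (1 <= p)%E.

Let q_gt0 (q : R) : (1 <= q%:E)%E -> 0 < q.
Proof. by rewrite lee_fin; exact: lt_le_trans ltr01. Qed.

Lemma lpnorm_ge_coord (v : 'I_n -> R) i : (forall j, 0 <= v j) -> v i <= lpnorm p v.
Proof.
move: hp; case: p => [q| |] //= q1 v0; last first.
  by rewrite -[v i]ger0_norm // (le_bigmax _ (fun j => `|v j|) i).
have q0 := q_gt0 q1.
rewrite -[v i](@powRK _ q) ?gt_eqF //; apply: ge0_ler_powR; rewrite ?nnegrE.
- by rewrite invr_ge0 ltW.
- exact: powR_ge0.
- by rewrite sumr_ge0 // => j _; exact: powR_ge0.
rewrite (bigD1 i) //= ger0_norm // lerDl sumr_ge0 // => j _; exact: powR_ge0.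
Qed.

Lemma ler_lpnorm (v w : 'I_n -> R) :
  (forall j, 0 <= v j <= w j) -> lpnorm p v <= lpnorm p w.
Proof.
move: hp; case: p => [q| |] //= q1 vw; last first.
  apply: le_bigmax2 => j _; have /andP[v0 vw'] := vw j.
  by rewrite !ger0_norm // (le_trans v0 vw').
have q0 := q_gt0 q1.
apply: ge0_ler_powR; rewrite ?nnegrE ?invr_ge0 ?(ltW q0) ?sumr_ge0 //;
  try by move=> j _; rewrite powR_ge0.
apply: ler_sum => j _; have /andP[v0 vw'] := vw j.
rewrite !ger0_norm ?(le_trans v0 vw') //.
by apply: ge0_ler_powR; rewrite ?nnegrE ?(le_trans v0 vw') // ltW.
Qed.

Lemma lpnormZ_le (c : R) (v : 'I_n -> R) : 0 <= c -> (forall j, 0 <= v j) ->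
  lpnorm p (fun j => c * v j) <= c * lpnorm p v.
Proof.
move: hp; case: p => [q| |] //= q1 c0 v0; last first.
  apply: bigmax_le => [|j _]; first by rewrite mulr_ge0 // bigmax_ge_id.
  rewrite normrM ger0_norm // ler_wpM2l //.
  exact: (le_bigmax _ (fun j => `|v j|) j).
have q0 := q_gt0 q1.
under eq_bigr do rewrite normrM ger0_norm // powRM //.
rewrite -mulr_sumr powRM ?sumr_ge0 ?powR_ge0 //.
by rewrite powRK ?gt_eqF.
Qed.

Hypothesis n2 : (2 <= n)%N.

Lemma mean_le_lpnorm (v : 'I_n -> R) i : (forall j, 0 <= v j) ->
  (\sum_(j | j != i) v j) / n.-1%:R <= lpnorm p v / proot p n.
Proof.
move=> v0; have m0 : 0 < n.-1%:R :> R by rewrite ltr0n; case: n n2 => [|[|]].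
have cardA : #|predC1 i| = n.-1 by rewrite cardC1 card_ord.
move: hp; case: p => [q| |] //= q1; last first.
  rewrite divr1 ler_pdivrMr // mulr_natr -cardA -sumr_const.
  apply: ler_sum => j _; rewrite -[v j]ger0_norm //.
  exact: (le_bigmax _ (fun j => `|v j|) j).
have q0 := q_gt0 q1; rewrite lee_fin in q1.
pose r := [seq v j | j <- enum (predC1 i)].
have sumE (F : R -> R) : \sum_(a <- r) F a = \sum_(j | j != i) F (v j).
  by rewrite big_map big_enum; apply: eq_bigl => j; rewrite inE.
have sizer : size r = n.-1 by rewrite size_map -cardE.
have r0 : all (>= 0) r by apply/allP => _ /mapP[j _ ->].
have := powR_mean_le q1 r0; rewrite sizer (sumE id) (sumE (fun a => a `^ q)).
set m := _ / _; set Tq := _ / _ => hm.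
have m_ge0 : 0 <= m by rewrite divr_ge0 ?sumr_ge0 // ltW.
rewrite -[m](@powRK _ q) ?gt_eqF //.
apply: (@le_trans _ _ (Tq `^ q^-1)).
  by apply: ge0_ler_powR; rewrite ?nnegrE ?invr_ge0 ?(ltW q0) ?powR_ge0 ?divr_ge0
    ?sumr_ge0 // ?(ltW m0) // => j _; exact: powR_ge0.
rewrite /Tq powRM ?invr_ge0 ?(ltW m0) ?sumr_ge0 //; last by move=> j _; exact: powR_ge0.
rewrite powRV ?gt_eqF //; apply: ler_wpM2r; first by rewrite invr_ge0 powR_ge0.
apply: ge0_ler_powR; rewrite ?nnegrE ?invr_ge0 ?(ltW q0) ?sumr_ge0 //;
  try by move=> j _; exact: powR_ge0.
rewrite [X in _ <= X](bigID (fun j => j != i)) /= ler_wpDr //.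
  by rewrite sumr_ge0 // => j _; exact: powR_ge0.
by apply: ler_sum => j _; rewrite ger0_norm.
Qed.

Lemma prod1D_le_lpnorm (v : 'I_n -> R) i : (forall j, 0 <= v j) ->
  \prod_(j | j != i) (1 + v j) <= (1 + lpnorm p v / proot p n) ^+ n.-1.
Proof.
move=> v0; have m0 : 0 < n.-1%:R :> R by rewrite ltr0n; case: n n2 => [|[|]].
have cardA : #|predC1 i| = n.-1 by rewrite cardC1 card_ord.
have := (@leif_AGM R _ (predC1 i) (fun j => 1 + v j) (fun j _ => addr_ge0 ler01 (v0 j))).1.
rewrite cardA => /le_trans; apply.
have -> : (\sum_(j in predC1 i) (1 + v j)) / n.-1%:R = 1 + (\sum_(j | j != i) v j) / n.-1%:R.
  by rewrite big_split /= sumr_const cardA mulrDl divff // gt_eqF.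
have pr0 := proot_gt0 p n2.
apply: lerXn2r; rewrite ?nnegrE ?addr_ge0 ?divr_ge0 ?sumr_ge0 ?lpnorm_ge0 ?(ltW m0) ?(ltW pr0) //.
by rewrite lerD2l mean_le_lpnorm.
Qed.

End lp_norm.

(** * Absolute values and the distances d_i *)

Section absval_theory.
Variables (K : fieldType) (R : realType) (abs : K -> R).
Hypothesis ha : absval abs.

Lemma abs_ge0 x : 0 <= abs x.
Proof. by case: ha. Qed.

Lemma abs_eq0 x : (abs x == 0) = (x == 0).
Proof. by case: ha => _ aeq _ _; apply/eqP/eqP => /aeq. Qed.

Lemma abs0 : abs 0 = 0.
Proof. by apply/eqP; rewrite abs_eq0. Qed.

Lemma abs_gt0 x : (0 < abs x) = (x != 0).
Proof. by rewrite lt_neqAle abs_ge0 andbT eq_sym abs_eq0. Qed.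

Lemma absM x y : abs (x * y) = abs x * abs y.
Proof. by case: ha. Qed.

Lemma abs_lerD x y : abs (x + y) <= abs x + abs y.
Proof. by case: ha. Qed.

Lemma abs1 : abs 1 = 1.
Proof.
have a1 : abs 1 != 0 by rewrite abs_eq0 oner_eq0.
by apply: (mulfI a1); rewrite -absM !mulr1.
Qed.

Lemma absN x : abs (- x) = abs x.
Proof.
have hN : abs (-1) = 1.
  have := abs_ge0 (-1); have : abs (-1) * abs (-1) = 1 by rewrite -absM mulrNN mulr1 abs1.
  nra.
by rewrite -mulN1r absM hN mul1r.
Qed.

Lemma abs_distC x y : abs (x - y) = abs (y - x).
Proof. by rewrite -absN opprB. Qed.

Lemma absV x : abs x^-1 = (abs x)^-1.
Proof.
have [->|x0] := eqVneq x 0; first by rewrite invr0 abs0 invr0.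
have ax : abs x != 0 by rewrite abs_eq0.
by apply: (mulfI ax); rewrite -absM !mulfV // abs1.
Qed.

Lemma absf_div x y : abs (x / y) = abs x / abs y.
Proof. by rewrite absM absV. Qed.

Lemma abs_prod (I : Type) (r : seq I) (P : pred I) (F : I -> K) :
  abs (\prod_(i <- r | P i) F i) = \prod_(i <- r | P i) abs (F i).
Proof. exact: (big_morph abs absM abs1). Qed.

Lemma abs_prod1D_sub1 (I : Type) (r : seq I) (P : pred I) (w : I -> K) :
  abs (\prod_(i <- r | P i) (1 + w i) - 1) <= \prod_(i <- r | P i) (1 + abs (w i)) - 1.
Proof.
apply: (big_rec2 (fun y1 y2 => abs (y1 - 1) <= y2 - 1)); first by rewrite !subrr abs0.
move=> i y1 y2 _ h.
have hy : abs y1 <= y2 by have := abs_lerD (y1 - 1) 1; rewrite subrK abs1; lra.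
have -> : (1 + w i) * y1 - 1 = (y1 - 1) + w i * y1 by ring.
apply: le_trans (abs_lerD _ _) _; rewrite absM.
have : abs (w i) * abs y1 <= abs (w i) * y2 by rewrite ler_wpM2l ?abs_ge0.
lra.
Qed.

End absval_theory.

Definition distinct (T : eqType) n (x : 'I_n -> T) := forall i j : 'I_n, i != j -> x i != x j.

Lemma exists_neq n (i : 'I_n) : (1 < n)%N -> exists j : 'I_n, j != i.
Proof.
move=> n2; have /card_gt0P[j] : (0 < #|predC1 i|)%N.
  by rewrite cardC1 card_ord; case: n i n2 => [|[|]].
by exists j.
Qed.

Section distance.
Variables (K : fieldType) (R : realType) (abs : K -> R) (n : nat) (x : 'I_n -> K).
Hypotheses (ha : absval abs) (n2 : (2 <= n)%N).

Let dist_bigmin i : exists2 j, j != i &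
  \big[Order.min/+oo%E]_(j < n | j != i) (abs (x i - x j))%:E = (abs (x i - x j))%:E.
Proof.
have [j0 j0i] := exists_neq i n2.
have [j /= ji ->] := @eq_bigmin _ _ _ _ j0 (fun j => j != i)
  (fun j => (abs (x i - x j))%:E) j0i (fun _ _ => leey _).
by exists j.
Qed.

Lemma dist_attained i : exists2 j, j != i & dist abs x i = abs (x i - x j).
Proof. by have [j ji E] := dist_bigmin i; exists j; rewrite // /dist E. Qed.

Lemma dist_le i j : j != i -> dist abs x i <= abs (x i - x j).
Proof.
move=> ji; have [k _ E] := dist_bigmin i.
by rewrite /dist E /= -lee_fin -E bigmin_le_cond.
Qed.

Lemma dist_gt0 i : distinct x -> 0 < dist abs x i.
Proof.
move=> hx; have [j ji ->] := dist_attained i.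
by rewrite abs_gt0 // subr_eq0 hx // eq_sym.
Qed.

End distance.

(** * Weierstrass-type corrections *)

Definition rel_err (K : fieldType) (R : realType) (abs : K -> R) n (xi x : 'I_n -> K) j :=
  abs (x j - xi j) / dist abs x j.

Definition wstep (K : fieldType) n (f : {poly K}) (y x : 'I_n -> K) : 'I_n -> K :=
  fun i => x i - f.[x i] / (lead_coef f * \prod_(j < n | j != i) (x i - y j)).

Lemma WTS (K : fieldType) n (f : {poly K}) M (x : 'I_n -> K) :
  WT f M.+1 x = wstep f (WT f M x) x.
Proof. by []. Qed.

Section relative_error.
Variables (K : fieldType) (R : realType) (abs : K -> R) (n : nat) (p : \bar R).
Variables (xi x : 'I_n -> K).
Hypotheses (ha : absval abs) (n2 : (2 <= n)%N) (hp : (1 <= p)%E) (hx : distinct x).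

Lemma Err_ge0 : 0 <= Err abs p xi x.
Proof. exact: lpnorm_ge0. Qed.

Lemma rel_err_ge0 j : 0 <= rel_err abs xi x j.
Proof. by rewrite divr_ge0 ?abs_ge0 // ltW // dist_gt0. Qed.

Lemma rel_err_le_Err j : rel_err abs xi x j <= Err abs p xi x.
Proof. exact: lpnorm_ge_coord rel_err_ge0. Qed.

Lemma err_le_rel_err i j : j != i ->
  abs (x j - xi j) <= rel_err abs xi x j * abs (x i - x j).
Proof.
move=> ji; rewrite /rel_err mulrAC ler_pdivlMr ?dist_gt0 //.
by rewrite ler_wpM2l ?abs_ge0 // (abs_distC ha) dist_le // eq_sym.
Qed.

Lemma err_le_Err i j : j != i -> abs (x j - xi j) <= Err abs p xi x * abs (x i - x j).
Proof.
move=> ji; apply: le_trans (err_le_rel_err ji) _.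
by rewrite ler_wpM2r ?abs_ge0 ?rel_err_le_Err.
Qed.

Lemma Err_eq0 i : Err abs p xi x = 0 -> x i = xi i.
Proof.
move=> E0; have [j ji] := exists_neq i n2; apply/eqP; rewrite -subr_eq0 -(abs_eq0 ha).
rewrite eq_sym in ji; have := err_le_Err (i := j) ji.
by rewrite eq_le (abs_ge0 ha) andbT E0 mul0r.
Qed.

Let err_le_Err_sym i j : i != j ->
  abs (x i - xi i) + abs (x j - xi j) <= 2 * Err abs p xi x * abs (x i - x j).
Proof.
move=> ij; have ji : j != i by rewrite eq_sym.
have := err_le_Err (i := j) ij; have := err_le_Err ji.
rewrite (abs_distC ha (x j) (x i)); lra.
Qed.

Lemma root_dist_le i j : i != j ->
  abs (xi i - xi j) <= (1 + 2 * Err abs p xi x) * abs (x i - x j).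
Proof.
move=> ij; have := err_le_Err_sym ij.
have -> : xi i - xi j = - (x i - xi i) + (x j - xi j) + (x i - x j) by ring.
have := abs_lerD ha (- (x i - xi i) + (x j - xi j)) (x i - x j).
have := abs_lerD ha (- (x i - xi i)) (x j - xi j).
rewrite absN //; lra.
Qed.

Lemma root_dist_ge i j : i != j ->
  (1 - 2 * Err abs p xi x) * abs (x i - x j) <= abs (xi i - xi j).
Proof.
move=> ij; have := err_le_Err_sym ij.
have := abs_lerD ha (x i - xi i + (xi i - xi j)) (- (x j - xi j)).
have := abs_lerD ha (x i - xi i) (xi i - xi j).
have -> : x i - xi i + (xi i - xi j) + - (x j - xi j) = x i - x j by ring.
rewrite absN //; lra.
Qed.

Section moved_points.
Variables (z : 'I_n -> K) (w : R).
Hypotheses (w0 : 0 <= w) (hz : forall j, abs (x j - z j) <= w * abs (x j - xi j)).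

Let move_le_sep i j : i != j ->
  abs (x j - z j) <= Err abs p xi x * w * abs (x i - x j).
Proof.
move=> ij; apply: le_trans (hz j) _; rewrite (mulrC (Err abs p xi x) w) -mulrA.
by apply: ler_wpM2l => //; rewrite err_le_Err // eq_sym.
Qed.

Lemma moved_sep_ge i j : i != j ->
  (1 - 2 * Err abs p xi x * w) * abs (x i - x j) <= abs (x i - z j).
Proof.
move=> ij; have := move_le_sep ij; have := abs_lerD ha (x i - z j) (z j - x j).
have -> : x i - z j + (z j - x j) = x i - x j by ring.
rewrite (abs_distC ha (z j)).
have : 0 <= Err abs p xi x * w * abs (x i - x j) by rewrite !mulr_ge0 ?Err_ge0 ?abs_ge0.
lra.
Qed.

Lemma moved_sep2_ge i j : i != j ->
  (1 - 2 * Err abs p xi x * w) * abs (x i - x j) <= abs (z i - z j).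
Proof.
move=> ij; have ji : j != i by rewrite eq_sym.
have := move_le_sep ij; have := move_le_sep ji; rewrite (abs_distC ha (x j) (x i)).
have := abs_lerD ha (x i - z i + (z i - z j)) (z j - x j).
have := abs_lerD ha (x i - z i) (z i - z j).
have -> : x i - z i + (z i - z j) + (z j - x j) = x i - x j by ring.
rewrite (abs_distC ha (z j)).
lra.
Qed.

End moved_points.

End relative_error.

Section weierstrass_step.
Variables (K : fieldType) (R : realType) (abs : K -> R) (n : nat) (p : \bar R).
Variables (f : {poly K}) (xi x y : 'I_n -> K) (g ph : R).
Hypotheses (ha : absval abs) (n2 : (2 <= n)%N) (hp : (1 <= p)%E).
Hypotheses (hf : root_vector f xi) (a0 : lead_coef f != 0) (hx : distinct x).
Hypotheses (g0 : 0 < g) (ph0 : 0 <= ph).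
Hypothesis hy : forall j, abs (y j - xi j) <= g * ph * abs (x j - xi j).
Hypothesis hxy : forall i j, i != j -> g * abs (x i - x j) <= abs (x i - y j).

Let w := (1 + Err abs p xi x * ph / proot p n) ^+ n.-1.

Lemma wstep_sep i j : j != i -> x i - y j != 0.
Proof.
move=> ji; rewrite -(abs_gt0 ha); apply: lt_le_trans (hxy _); last by rewrite eq_sym.
by rewrite mulr_gt0 // abs_gt0 // subr_eq0 hx // eq_sym.
Qed.

Lemma wstep_factor i : x i - wstep f y x i =
  (x i - xi i) * \prod_(j | j != i) (1 + (y j - xi j) / (x i - y j)).
Proof.
have hD : \prod_(j | j != i) (x i - y j) != 0 by apply/prodf_neq0 => j; exact: wstep_sep.
rewrite (eq_bigr (fun j => (x i - xi j) / (x i - y j))); last first.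
  by move=> j ji; field; exact: wstep_sep.
rewrite /wstep opprB addrC addrNK hf (bigD1 i) //= prodf_div.
by field; rewrite a0 hD.
Qed.

Lemma wstep_prod_le i :
  \prod_(j | j != i) (1 + abs ((y j - xi j) / (x i - y j))) <= w.
Proof.
have e0 := rel_err_ge0 xi ha n2 hx.
apply: le_trans (_ : \prod_(j | j != i) (1 + ph * rel_err abs xi x j) <= _).
  apply: ler_prod => j ji; rewrite addr_ge0 ?abs_ge0 //= lerD2l.
  rewrite (absf_div ha) ler_pdivrMr ?abs_gt0 ?wstep_sep //.
  apply: le_trans (hy j) (le_trans _ (_ : ph * rel_err abs xi x j * (g * abs (x i - x j)) <= _)).
    rewrite [X in _ <= X]mulrCA -mulrA ler_wpM2l ?mulr_ge0 ?(ltW g0) //.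
    by rewrite -mulrA ler_wpM2l // (err_le_rel_err xi ha n2 hx ji).
  by apply: ler_wpM2l; [rewrite mulr_ge0 | apply: hxy; rewrite eq_sym].
have pr0 := proot_gt0 p n2.
apply: le_trans (prod1D_le_lpnorm hp n2 i (fun j => mulr_ge0 ph0 (e0 j))) _.
apply: lerXn2r; rewrite ?nnegrE ?addr_ge0 ?divr_ge0 ?mulr_ge0 ?lpnorm_ge0 ?(ltW pr0) //.
by rewrite lerD2l ler_pM2r ?invr_gt0 // mulrC lpnormZ_le.
Qed.

Lemma wstep_err_le i : abs (wstep f y x i - xi i) <= (w - 1) * abs (x i - xi i).
Proof.
have -> : wstep f y x i - xi i = - ((x i - wstep f y x i) - (x i - xi i)) by ring.
rewrite wstep_factor absN // -{2}[x i - xi i]mulr1 -mulrBr absM // mulrC.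
rewrite ler_wpM2r ?abs_ge0 //; apply: le_trans (abs_prod1D_sub1 ha _ _ _) _.
by rewrite lerD2r wstep_prod_le.
Qed.

Lemma wstep_move_le i : abs (x i - wstep f y x i) <= w * abs (x i - xi i).
Proof.
rewrite wstep_factor absM // mulrC ler_wpM2r ?abs_ge0 //.
apply: le_trans (wstep_prod_le i); rewrite abs_prod //.
apply: ler_prod => j _; rewrite (abs_ge0 ha) /=.
by have := abs_lerD ha 1 ((y j - xi j) / (x i - y j)); rewrite abs1.
Qed.

End weierstrass_step.

Section weierstrass_maps.
Variables (K : fieldType) (R : realType) (abs : K -> R) (n : nat) (p : \bar R).
Variables (f : {poly K}) (xi x : 'I_n -> K).
Hypotheses (ha : absval abs) (n2 : (2 <= n)%N) (hp : (1 <= p)%E).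
Hypotheses (hf : root_vector f xi) (a0 : lead_coef f != 0) (hx : distinct x).
Hypothesis HP : Psi p n (Err abs p xi x) <= 2.

Local Notation t := (Err abs p xi x).

Let t0 : 0 <= t. Proof. exact: Err_ge0. Qed.

Let phi_ge0 M : 0 <= phi p n M t.
Proof. by case/andP: (phi_ge0_le1 n2 t0 HP M). Qed.

Let omegaN_ge0 M : 0 <= omegaN p n M t.
Proof. exact: le_trans ler01 (omegaN_ge1 n2 t0 (phi_ge0 M)). Qed.

Lemma WT_bounds M :
  (forall j, abs (WT f M x j - xi j) <= psi_ext p n M t * phi p n M t * abs (x j - xi j)) /\
  (forall i j, i != j -> psi_ext p n M t * abs (x i - x j) <= abs (x i - WT f M x j)).
Proof.
elim: M => [|M [hy hxy]]; first by split => [j|i j _]; rewrite /= !mul1r.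
have g0 := psi_ext_gt0 n2 t0 HP M.
have hmove := wstep_move_le ha n2 hp hf a0 hx g0 (phi_ge0 M) hy hxy.
split => [j|i j ij]; rewrite WTS.
  rewrite /psi_ext psi_mul_phi //.
  exact: (wstep_err_le ha n2 hp hf a0 hx g0 (phi_ge0 M) hy hxy).
by have := moved_sep_ge ha n2 hp hx (omegaN_ge0 M) hmove ij.
Qed.

Lemma WT_err_le M j :
  abs (WT f M.+1 x j - xi j) <= (omegaN p n M t - 1) * abs (x j - xi j).
Proof. by rewrite -(psi_mul_phi n2 t0 HP); exact: (WT_bounds M.+1).1. Qed.

Lemma WT_move_le M j : abs (x j - WT f M.+1 x j) <= omegaN p n M t * abs (x j - xi j).
Proof.
have [hy hxy] := WT_bounds M.
exact: wstep_move_le ha n2 hp hf a0 hx (psi_ext_gt0 n2 t0 HP M) (phi_ge0 M) hy hxy j.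
Qed.

Lemma WT_sep M i j : i != j ->
  psi p n M.+1 t * abs (x i - x j) <= abs (WT f M.+1 x i - WT f M.+1 x j).
Proof.
by move=> ij; have := moved_sep2_ge ha n2 hp hx (omegaN_ge0 M) (WT_move_le M) ij.
Qed.

Lemma WT_distinct M : distinct (WT f M.+1 x).
Proof.
move=> i j ij; rewrite -subr_eq0 -(abs_gt0 ha); apply: lt_le_trans (WT_sep M ij).
by rewrite mulr_gt0 ?(psi_gt0 n2 t0 HP) // abs_gt0 // subr_eq0 hx.
Qed.

Lemma WT_dist_ge M i : psi p n M.+1 t * dist abs x i <= dist abs (WT f M.+1 x) i.
Proof.
have [j ji ->] := dist_attained abs (WT f M.+1 x) n2 i.
apply: le_trans (WT_sep M _); last by rewrite eq_sym.
by rewrite ler_wpM2l ?dist_le // ltW ?(psi_gt0 n2 t0 HP).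
Qed.

Lemma WT_inD N : inD f N x.
Proof.
elim: N => [//|N IH]; split => // i j ij.
rewrite -subr_eq0 -(abs_gt0 ha); apply: lt_le_trans ((WT_bounds N).2 i j ij).
by rewrite mulr_gt0 ?psi_ext_gt0 // abs_gt0 // subr_eq0 hx.
Qed.

Lemma Err_WT_le M : Err abs p xi (WT f M.+1 x) <= phi p n M.+1 t * t.
Proof.
have e0 := rel_err_ge0 xi ha n2 hx.
apply: le_trans (lpnormZ_le hp (phi_ge0 M.+1) e0); apply: ler_lpnorm => // j.
rewrite (rel_err_ge0 xi ha n2 (WT_distinct M)) /rel_err.
have dx0 := dist_gt0 ha n2 j hx; have dy0 := dist_gt0 ha n2 j (WT_distinct M).
have g0 := psi_gt0 n2 t0 HP M; set g := psi p n M.+1 t in g0 *.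
have -> : phi p n M.+1 t * (abs (x j - xi j) / dist abs x j) =
    g * phi p n M.+1 t * abs (x j - xi j) / (g * dist abs x j).
  by field; rewrite !gt_eqF.
apply: ler_pM; rewrite ?(abs_ge0 ha) ?invr_ge0 ?(ltW dy0) //.
  by have := (WT_bounds M.+1).1 j.
by rewrite lef_pV2 ?posrE ?mulr_gt0 // WT_dist_ge.
Qed.

End weierstrass_maps.

Section scaled_weierstrass_maps.
Variables (K : fieldType) (R : realType) (abs : K -> R) (n : nat) (p : \bar R).
Variables (f : {poly K}) (xi x : 'I_n -> K) (t c : R).
Hypotheses (ha : absval abs) (n2 : (2 <= n)%N) (hp : (1 <= p)%E).
Hypotheses (hf : root_vector f xi) (a0 : lead_coef f != 0) (hx : distinct x).
Hypotheses (t0 : 0 <= t) (HP : Psi p n t <= 2) (c01 : 0 <= c <= 1).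
Hypothesis hE : Err abs p xi x <= c * t.

Let s0 : 0 <= Err abs p xi x. Proof. exact: Err_ge0. Qed.

Lemma Psi_Err_le2 : Psi p n (Err abs p xi x) <= 2.
Proof.
apply: le_trans (ler_Psi p n2 s0 (le_trans hE _)) HP.
by rewrite ler_piMl //; case/andP: c01.
Qed.

Lemma WT_err_scale M j : abs (WT f M.+1 x j - xi j) <=
  c ^+ M.+1 * (omegaN p n M t - 1) * abs (x j - xi j).
Proof.
apply: le_trans (WT_err_le ha n2 hp hf a0 hx Psi_Err_le2 M j) _.
rewrite ler_wpM2r ?(abs_ge0 ha) //; exact (omegaN_scale n2 t0 HP c01 s0 hE M).
Qed.

Lemma Err_WT_scale M :
  Err abs p xi (WT f M.+1 x) <= c ^+ M.+2 * phi p n M.+1 t * t.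
Proof.
apply: le_trans (Err_WT_le ha n2 hp hf a0 hx Psi_Err_le2 M) _.
have -> : c ^+ M.+2 * phi p n M.+1 t * t = c ^+ M.+1 * phi p n M.+1 t * (c * t).
  by rewrite exprS; ring.
apply: ler_pM => //; first by case/andP: (phi_ge0_le1 n2 s0 Psi_Err_le2 M.+1).
exact (phi_scale n2 t0 HP c01 s0 hE M.+1).
Qed.

End scaled_weierstrass_maps.

(** * Simple zeros, convergence and the iteration *)

(* If h <> 0 vanished everywhere, 1 + h X would be a nonconstant polynomial without roots. *)
Lemma horner_eq0_poly_eq0 (K : closedFieldType) (h : {poly K}) :
  (forall z, h.[z] = 0) -> h = 0.
Proof.
move=> h0; apply/eqP/negPn/negP => hn0.
have : size (1 + h * 'X) != 1%N.
  have hs : (0 < size h)%N by rewrite lt0n size_poly_eq0.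
  by rewrite addrC size_addl size_mulX // ?size_poly1 ?ltnS // eqSS -lt0n.
by case/closed_rootP => z; rewrite /root !hornerE h0 mul0r addr0 oner_eq0.
Qed.

Lemma root_vector_prod (K : closedFieldType) n (f : {poly K}) (xi : 'I_n -> K) :
  root_vector f xi -> f = lead_coef f *: \prod_(i < n) ('X - (xi i)%:P).
Proof.
move=> hf; apply/eqP; rewrite -subr_eq0; apply/eqP/horner_eq0_poly_eq0 => z.
rewrite hornerD hornerN hornerZ horner_prod hf.
by under [X in _ - _ * X]eq_bigr do rewrite hornerXsubC; rewrite subrr.
Qed.

Lemma mup_root_vector (K : closedFieldType) n (f : {poly K}) (xi : 'I_n -> K) z :
  root_vector f xi -> lead_coef f != 0 -> distinct xi -> root f z -> mup z f = 1%N.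
Proof.
move=> hf a0 hxi; rewrite (root_vector_prod hf) -mul_polyC rootM rootC (negbTE a0).
rewrite mupMr ?rootC //=.
rewrite -(big_map xi predT (fun y => 'X - y%:P)) root_prod_XsubC mu_prod_XsubC.
case/mapP => i _ ->; rewrite count_map.
rewrite (eq_count (a2 := pred1 i)) ?count_uniq_mem ?index_enum_uniq ?mem_index_enum //.
by move=> j /=; have [->|ji] := eqVneq j i; [rewrite eqxx | exact/negbTE/hxi].
Qed.

Section max_norm.
Variables (K : fieldType) (R : realType) (abs : K -> R) (n : nat).

Lemma maxnorm_ge0 (v : 'I_n -> K) : 0 <= maxnorm abs v.
Proof. exact: bigmax_ge_id. Qed.

Lemma maxnorm_ge_coord (v : 'I_n -> K) i : abs (v i) <= maxnorm abs v.
Proof. exact: (le_bigmax _ (fun j => abs (v j)) i). Qed.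

Lemma maxnorm_le (v : 'I_n -> K) (B : R) :
  0 <= B -> (forall i, abs (v i) <= B) -> maxnorm abs v <= B.
Proof. by move=> B0 vB; apply: bigmax_le. Qed.

End max_norm.

Lemma converges_geom (K : fieldType) (R : realType) (abs : K -> R) (u : nat -> K) l (th a : R) :
  0 <= th < 1 -> (forall k, abs (u k - l) <= th ^+ k * a) -> converges abs u l.
Proof.
move=> /andP[th0 th1] hu e e0.
have a1 : 0 < `|a| + 1 by rewrite ltr_pwDr.
have /cvg_expr th_cvg : `|th| < 1 by rewrite ger0_norm.
have [k0 _ hk0] := (proj1 (@cvgr0Pnorm_lt R R^o nat _ _ (fun k => th ^+ k)) th_cvg) _ (divr_gt0 e0 a1). exists k0 => k /hk0; rewrite ger0_norm ?exprn_ge0 // ltr_pdivlMr //.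
apply: le_lt_trans; apply: le_trans (hu k) _.
by rewrite ler_wpM2l ?exprn_ge0 // (le_trans (ler_norm a)) // lerDl.
Qed.

(* For t = 0 this relies on s / 0 = 0. *)
Lemma scale_ratio (R : realFieldType) (s t : R) : 0 <= s -> s <= t ->
  0 <= s / t <= 1 /\ s <= s / t * t.
Proof.
move=> s0 st; have [t0|tp] := eqVneq t 0.
  have -> : s = 0 by apply/le_anti; rewrite s0 -t0 st.
  by rewrite !mul0r lexx ler01.
have tp' : 0 < t by rewrite lt_neqAle eq_sym tp (le_trans s0 st).
by rewrite divr_ge0 ?ler_pdivrMr ?mul1r ?divfK // ltW.
Qed.

Section roots_and_approximations.
Variables (K : fieldType) (R : realType) (abs : K -> R) (n : nat) (p : \bar R).
Variables (xi y : 'I_n -> K).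
Hypotheses (ha : absval abs) (n2 : (2 <= n)%N) (hp : (1 <= p)%E) (hy : distinct y).

Lemma distinct_roots : 2 * Err abs p xi y < 1 -> distinct xi.
Proof.
move=> hE i j ij; rewrite -subr_eq0 -(abs_gt0 ha).
apply: lt_le_trans (root_dist_ge xi ha n2 hp hy ij).
by rewrite mulr_gt0 ?subr_gt0 // abs_gt0 // subr_eq0 hy.
Qed.

Lemma dist_root_le j : dist abs xi j <= (1 + 2 * Err abs p xi y) * dist abs y j.
Proof.
have [l lj ->] := dist_attained abs y n2 j.
by apply: le_trans (dist_le abs xi n2 lj) _; rewrite (root_dist_le xi ha n2 hp hy) // eq_sym.
Qed.

Lemma Err_le_maxnorm : distinct xi -> 2 * Err abs p xi y <= 1 ->
  Err abs p xi y <= lpnorm p (fun j => 2 / dist abs xi j) * maxnorm abs (fun j => y j - xi j).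
Proof.
move=> hxi hE; set m := maxnorm _ _; have m0 : 0 <= m := maxnorm_ge0 _ _.
have d0 j : 0 < dist abs xi j := dist_gt0 ha n2 j hxi.
rewrite mulrC; apply: le_trans (lpnormZ_le hp m0 (fun j => divr_ge0 (ler0n _ 2) (ltW (d0 j)))).
apply: ler_lpnorm => // j; rewrite (rel_err_ge0 xi ha n2 hy) /=.
have dy0 := dist_gt0 ha n2 j hy.
rewrite /rel_err ler_pdivrMr // -mulrA.
apply: le_trans (maxnorm_ge_coord abs (fun j => y j - xi j) j) _.
rewrite ler_peMr // mulrAC ler_pdivlMr // mul1r.
apply: le_trans (dist_root_le j) _.
by rewrite ler_wpM2r ?(ltW dy0) //; lra.
Qed.

End roots_and_approximations.

Lemma expS_sum m k : (m.+1 ^ k = m * \sum_(i < k) m.+1 ^ i + 1)%N.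
Proof. by rewrite -[m in (m * _)%N]/(m.+1.-1) -predn_exp addn1 prednK // expn_gt0. Qed.

Lemma sum_expS m k : (\sum_(i < k.+1) m ^ i = m * \sum_(i < k) m ^ i + 1)%N.
Proof.
rewrite big_ord_recl big_distrr addnC; congr (_ + _).
by apply: eq_bigr => i _; rewrite expnS.
Qed.

Lemma sum_exp_div m k : (0 < m)%N -> ((m.+1 ^ k).-1 %/ m = \sum_(i < k) m.+1 ^ i)%N.
Proof. by move=> m0; rewrite predn_exp mulKn. Qed.

Section iteration.
Variables (K : fieldType) (R : realType) (abs : K -> R) (n : nat) (p : \bar R).
Variables (f : {poly K}) (xi x0 : 'I_n -> K) (N : nat).
Hypotheses (ha : absval abs) (n2 : (2 <= n)%N) (hp : (1 <= p)%E).
Hypotheses (hf : root_vector f xi) (a0 : lead_coef f != 0) (hx0 : distinct x0).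
Hypothesis HP : Psi p n (Err abs p xi x0) <= 2.

Local Notation t0 := (Err abs p xi x0).
Local Notation x k := (iter k (WT f N.+1) x0).
Local Notation lam := (phi p n N.+1 t0).
Local Notation th := (psi p n N.+1 t0).
Local Notation S k := (\sum_(i < k) N.+2 ^ i)%N.

Let t0_ge0 : 0 <= t0. Proof. exact: Err_ge0. Qed.

Let th_ge0 : 0 <= th. Proof. exact/ltW/psi_gt0. Qed.

Let lam_ge0 : 0 <= lam. Proof. by case/andP: (phi_ge0_le1 n2 t0_ge0 HP N.+1). Qed.

Let lamS01 k : 0 <= lam ^+ S k <= 1.
Proof.
by case/andP: (phi_ge0_le1 n2 t0_ge0 HP N.+1) => l0 l1; rewrite exprn_ge0 ?exprn_ile1.
Qed.

Lemma iter_distinct_Err k : distinct (x k) /\ Err abs p xi (x k) <= lam ^+ S k * t0.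
Proof.
elim: k => [|k [hx hE]]; first by rewrite big_ord0 expr0 mul1r.
have HPk := Psi_Err_le2 n2 t0_ge0 HP (lamS01 k) hE.
split; first exact: WT_distinct ha n2 hp hf a0 hx HPk N.
apply: le_trans (Err_WT_scale ha n2 hp hf a0 hx t0_ge0 HP (lamS01 k) hE N) _.
by rewrite -exprM -exprSr sum_expS addn1 mulnC.
Qed.

Lemma iter_Psi_le2 k : Psi p n (Err abs p xi (x k)) <= 2.
Proof. by have [_ hE] := iter_distinct_Err k; exact: Psi_Err_le2 n2 t0_ge0 HP (lamS01 k) hE. Qed.

Lemma iter_inD k : inD f N.+1 (x k).
Proof. exact: WT_inD ha n2 hp hf a0 (iter_distinct_Err k).1 (iter_Psi_le2 k) N.+1. Qed.

Lemma iter_err_step k i :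
  abs (x k.+1 i - xi i) <= th * lam ^+ (N.+2 ^ k) * abs (x k i - xi i).
Proof.
have [hx hE] := iter_distinct_Err k.
apply: le_trans (WT_err_scale ha n2 hp hf a0 hx t0_ge0 HP (lamS01 k) hE N i) _.
by rewrite -(psi_mul_phi n2 t0_ge0 HP) mulrCA -exprM -exprSr expS_sum addn1 mulnC.
Qed.

Lemma iter_err k i : abs (x k i - xi i) <= th ^+ k * lam ^+ S k * abs (x0 i - xi i).
Proof.
elim: k => [|k IH]; first by rewrite big_ord0 !expr0 !mul1r.
apply: le_trans (iter_err_step k i) (le_trans (ler_wpM2l _ IH) _).
  by rewrite mulr_ge0 ?exprn_ge0.
suff -> : th ^+ k.+1 * lam ^+ S k.+1 = th * lam ^+ (N.+2 ^ k) * (th ^+ k * lam ^+ S k).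
  by rewrite !mulrA.
by rewrite big_ord_recr /= exprD exprSr; ring.
Qed.

Lemma iter_converges i : converges abs (fun k => x k i) (xi i).
Proof.
have [t0_eq0|t0_neq0] := eqVneq t0 0.
  apply: (@converges_geom _ _ _ _ _ 0 0); rewrite ?lexx ?ltr01 // => k.
  by have := iter_err k i; rewrite (Err_eq0 (xi := xi) ha n2 hp hx0) // subrr abs0 // !mulr0.
have t0_gt0 : 0 < t0 by rewrite lt_neqAle eq_sym t0_neq0.
apply: (@converges_geom _ _ _ _ _ th (abs (x0 i - xi i))).
  by rewrite ltW ?psi_gt0 ?psi_lt1.
move=> k; apply: le_trans (iter_err k i) _.
rewrite ler_wpM2r ?(abs_ge0 ha) // ler_piMr ?exprn_ge0 //.
by case/andP: (lamS01 k).
Qed.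

Lemma iter_conv_order : conv_order abs (fun k => x k) xi N.+2.
Proof.
split; first exact: iter_converges.
have hxi : distinct xi := distinct_roots ha n2 hp hx0 (Psi_le2_lt_half n2 t0_ge0 HP).
set L := lpnorm p (fun j => 2 / dist abs xi j).
have w1 := omegaN_ge1 n2 t0_ge0 (proj1 (andP (phi_ge0_le1 n2 t0_ge0 HP N))).
(* With c := E(x^(k)) / E(x^(0)) the scaled error bound reads c^(N+1) (omega_N - 1), and
   E(x^(k)) <= L max_i |x^(k)_i - xi_i|. *)
set C := (omegaN p n N t0 - 1) * (L / t0) ^+ N.+1.
have C0 : 0 <= C by rewrite mulr_ge0 ?subr_ge0 ?exprn_ge0 ?divr_ge0 ?lpnorm_ge0.
exists C; split=> // k.
have [hx hE] := iter_distinct_Err k.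
set tk := Err abs p xi (x k); set Mk := maxnorm abs (fun i => x k i - xi i).
have tk_t0 : tk <= t0 by apply: le_trans hE _; rewrite ler_piMl //; case/andP: (lamS01 k).
have [c01 hc] := scale_ratio (Err_ge0 _ _ _ _) tk_t0.
have hcM : tk / t0 <= L / t0 * Mk.
  rewrite mulrAC ler_wpM2r ?invr_ge0 //; apply: Err_le_maxnorm => //.
  apply: le_trans (ltW (Psi_le2_lt_half n2 t0_ge0 HP)); rewrite ler_pM2l //.
have Mk0 : 0 <= Mk := maxnorm_ge0 _ _.
apply: maxnorm_le => [|i]; first by rewrite mulr_ge0 ?exprn_ge0.
apply: le_trans (WT_err_scale ha n2 hp hf a0 hx t0_ge0 HP c01 hc N i) _.
have -> : C * Mk ^+ N.+2
    = (L / t0 * Mk) ^+ N.+1 * (omegaN p n N t0 - 1) * Mk.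
  by rewrite /C !exprMn !exprSr; ring.
apply: ler_pM; rewrite ?(abs_ge0 ha) ?maxnorm_ge_coord //.
  by rewrite mulr_ge0 ?subr_ge0 ?exprn_ge0 //; case/andP: c01.
rewrite ler_wpM2r ?subr_ge0 //; apply: lerXn2r; rewrite ?nnegrE //.
  by case/andP: c01.
by rewrite mulr_ge0 ?divr_ge0 ?lpnorm_ge0.
Qed.

End iteration.

Unset Implicit Arguments.

Theorem theorem2p11 (R : realType) (K : closedFieldType) (abs : K -> R)
    (n : nat) (f : {poly K}) (xi : 'I_n -> K) (N : nat) (p : \bar R)
    (x0 : 'I_n -> K) :
  absval abs -> (2 <= n)%N -> size f = n.+1 -> root_vector f xi ->
  (1 <= N)%N -> (1 <= p)%E ->
  (forall i j : 'I_n, i != j -> x0 i != x0 j) ->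
  Psi p n (Err abs p xi x0) <= 2 ->
  let x := fun k => iter k (WT f N) x0 in
  let lam := phi p n N (Err abs p xi x0) in
  let th := psi p n N (Err abs p xi x0) in
  (forall z, root f z -> mup z f = 1%N) /\
      (forall k, inD f N (x k)) /\
      (forall i, converges abs (fun k => x k i) (xi i)) /\
      (forall k i, abs (x k.+1 i - xi i)
                     <= th * lam ^+ (N.+1 ^ k) * abs (x k i - xi i)) /\
      (forall k i, abs (x k i - xi i)
                     <= th ^+ k * lam ^+ ((N.+1 ^ k).-1 %/ N) * abs (x0 i - xi i)) /\
      (Psi p n (Err abs p xi x0) < 2 -> conv_order abs x xi N.+1).
Proof.
move=> ha n2 hsize hf N1 hp hx0 HP; case: N N1 => [//|N] _ x lam th.
have a0 : lead_coef f != 0 by rewrite lead_coef_eq0 -size_poly_eq0 hsize.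
have t0 := Err_ge0 abs p xi x0.
have hxi := distinct_roots ha n2 hp hx0 (Psi_le2_lt_half n2 t0 HP).
split; first by move=> z; exact: mup_root_vector hf a0 hxi.
split; first exact: iter_inD ha n2 hp hf a0 hx0 HP.
split; first exact: iter_converges ha n2 hp hf a0 hx0 HP.
split; first exact: iter_err_step ha n2 hp hf a0 hx0 HP.
split; first by move=> k i; rewrite sum_exp_div //; exact: iter_err ha n2 hp hf a0 hx0 HP k i.
(* The order estimate already holds under Psi(E(x^(0))) <= 2. *)
by move=> _; exact: iter_conv_order ha n2 hp hf a0 hx0 HP.
Qed.
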